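(* Let $Q\subseteq 2^{\mathbb{N}^k}$ be a clopen quantifier. Then the support of $Q$ is definable in $\mathscr{L}_{\omega\omega}(Q)$ (as a subset of $\mathbb{N}^k$).
   Context: A quantifier of type $\langle k\rangle$ on $\mathbb{N}$ is a family $Q$ of subsets of $\mathbb{N}^k$, identified with a subset of $2^{\mathbb{N}^k}$ (product topology). A set $S\subseteq\mathbb{N}^k$ supports $Q$ if for all $A,B\subseteq\mathbb{N}^k$ with $A\cap S=B\cap S$ we have $A\in Q\iff B\in Q$; the support of $Q$ is the unique minimal set supporting $Q$ (it exists for closed $Q$). $\mathscr{L}_{\omega\omega}(Q)$ is first-order logic extended by formulas $Qx\,\varphi(x,y)$ ($x$ a $k$-tuple of variables) with $\mathbb{N}\models Qx\,\varphi(x,b)$ iff $\{a\in\mathbb{N}^k:\mathbb{N}\models\varphi(a,b)\}\in Q$. A set $B\subseteq\mathbb{N}^n$ is definable in $\mathscr{L}_{\omega\omega}(Q)$ if there is a formula $\varphi(x_1,\dots,x_n)$ whose only non-logical symbol is $Q$ such that $b\in B\iff\mathbb{N}\models\varphi(b)$. *)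

From mathcomp Require Import all_boot.
Set Implicit Arguments. Unset Strict Implicit. Unset Printing Implicit Defensive.

Notation point k := (k.-tuple nat).

Definition quantifier (k : nat) := (point k -> Prop) -> Prop.

(* Product topology on 2^(N^k): Q is open iff each A in Q has a basic
   (cylinder) neighbourhood, determined by finitely many coordinates F,
   contained in Q. *)
Definition qopen (k : nat) (Q : quantifier k) : Prop :=
  forall A, Q A -> exists F : seq (point k),
    forall B, (forall a, a \in F -> (A a <-> B a)) -> Q B.

Definition qclosed (k : nat) (Q : quantifier k) : Prop :=
  qopen (fun A => ~ Q A).

Definition qclopen (k : nat) (Q : quantifier k) : Prop := qopen Q /\ qclosed Q.

Definition supports (k : nat) (Q : quantifier k) (S : point k -> Prop) : Prop :=
  forall A B, (forall a, S a -> (A a <-> B a)) -> (Q A <-> Q B).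

(* S is the support of Q: a supporting set contained in every supporting set
   (hence the unique minimal one). *)
Definition is_support (k : nat) (Q : quantifier k) (S : point k -> Prop) : Prop :=
  supports Q S /\ forall T, supports Q T -> forall a, S a -> T a.

(* Formulas of L_{omega omega}(Q) with no non-logical symbols besides Q.
   Variables are natural numbers. *)
Inductive form (k : nat) : Type :=
| FEq  : nat -> nat -> form k
| FNeg : form k -> form k
| FAnd : form k -> form k -> form k
| FEx  : nat -> form k -> form k
| FQ   : point k -> form k -> form k.   (* Q x_1 ... x_k phi *)

Definition upd (rho : nat -> nat) (x v : nat) : nat -> nat :=
  fun y => if y == x then v else rho y.

(* Updating at a k-tuple of variables xs with values a (first occurrence
   of a variable in xs determines its value). *)
Definition updt (k : nat) (rho : nat -> nat) (xs : point k) (a : point k) : nat -> nat :=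
  fun y => if y \in (xs : seq nat) then nth 0 a (index y xs) else rho y.

Fixpoint sat (k : nat) (Q : quantifier k) (rho : nat -> nat) (phi : form k) : Prop :=
  match phi with
  | FEq x y => rho x = rho y
  | FNeg p => ~ sat Q rho p
  | FAnd p q => sat Q rho p /\ sat Q rho q
  | FEx x p => exists v, sat Q (upd rho x v) p
  | FQ xs p => Q (fun a => sat Q (updt rho xs a) p)
  end.

Definition definable (k n : nat) (Q : quantifier k) (B : point n -> Prop) : Prop :=
  exists phi : form k, forall (b : point n) (rho : nat -> nat),
    (forall i, i < n -> rho i = nth 0 b i) -> (B b <-> sat Q rho phi).

From mathcomp Require Import all_boot.
From Stdlib Require Import Classical ClassicalEpsilon FunctionalExtensionality PropExtensionality.
Set Implicit Arguments. Unset Strict Implicit. Unset Printing Implicit Defensive.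

(* Call b pivotal for Q when Q(A ∪ {b}) and Q(A \ {b}) differ for some A.
   Since 2^(N^k) is compact, a clopen Q only depends on a finite set L of
   points; changing a set one point of L at a time then shows that the
   pivotal points support Q, and they obviously lie in every support.  Only
   the trace of A on L matters, so b is pivotal iff some set A with at most
   |L| elements witnesses it, and such an A can be guessed by |L| blocks of k
   existentially quantified variables: this gives the defining formula. *)

Definition agree (T : countType) (n : nat) (A B : T -> Prop) :=
  forall p, pickle p < n -> (A p <-> B p).

Lemma agree_sym (T : countType) n (A B : T -> Prop) : agree n A B -> agree n B A.
Proof. by move=> h p hp; apply: iff_sym (h p hp). Qed.

Lemma agree_trans (T : countType) n (A B C : T -> Prop) :
  agree n A B -> agree n B C -> agree n A C.
Proof. by move=> h1 h2 p hp; apply: iff_trans (h1 p hp) (h2 p hp). Qed.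

Lemma agree_le (T : countType) m n (A B : T -> Prop) :
  m <= n -> agree n A B -> agree m A B.
Proof. by move=> hmn h p hp; apply: h; apply: leq_trans hp hmn. Qed.

Section ClopenDeterminedByPrefix.
Variables (T : countType) (Q : (T -> Prop) -> Prop).
Hypothesis Q_open : forall A, Q A ->
  exists F : seq T, forall B, (forall a, a \in F -> (A a <-> B a)) -> Q B.
Hypothesis Q_coopen : forall A, ~ Q A ->
  exists F : seq T, forall B, (forall a, a \in F -> (A a <-> B a)) -> ~ Q B.

Definition determined m X :=
  exists n, forall A B, agree m A X -> agree n A B -> Q A -> Q B.

Definition set_at m (b : Prop) X : T -> Prop :=
  fun p => if pickle p == m then b else X p.

Lemma agree_set_at m b X : agree m (set_at m b X) X.
Proof. by move=> p hp; rewrite /set_at (ltn_eqF hp). Qed.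

Lemma agree_succ_set_at m X A b :
  agree m A X -> (b <-> exists q, pickle q = m /\ A q) -> agree m.+1 A (set_at m b X).
Proof.
move=> hA hb p; rewrite ltnS leq_eqVlt /set_at; case: eqP => [e _ | _ /hA //].
rewrite hb; split=> [Ap | [q [eq Aq]]]; first by exists p.
by have -> : p = q by apply: (pcan_inj pickleK); rewrite e eq.
Qed.

Lemma determined_set_at m X :
  determined m.+1 (set_at m True X) -> determined m.+1 (set_at m False X) ->
  determined m X.
Proof.
move=> [n1 h1] [n2 h2]; exists (maxn (maxn n1 n2) m.+1) => A B hA hAB.
have hAB1 : agree n1 A B by apply: agree_le hAB; rewrite !leq_max leqnn.
have hAB2 : agree n2 A B by apply: agree_le hAB; rewrite !leq_max leqnn orbT.
have [hb | hb] := classic (exists q, pickle q = m /\ A q).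
- by apply: h1 hAB1; apply: agree_succ_set_at hA _.
- by apply: h2 hAB2; apply: agree_succ_set_at hA _.
Qed.

Lemma undetermined_set_at m X :
  ~ determined m X -> exists b, ~ determined m.+1 (set_at m b X).
Proof.
move=> nd; apply: NNPP => h; apply: nd.
by apply: determined_set_at; apply: NNPP => nd'; apply: h; eexists; exact: nd'.
Qed.

Lemma locally_constant L :
  exists m, forall A B, agree m A L -> agree m B L -> Q A -> Q B.
Proof.
have bound (F : seq T) : exists m, forall a, a \in F -> pickle a < m.
  by exists (\max_(a <- F) (pickle a).+1) => a aF; apply: leq_bigmax_seq.
have [QL | QL] := classic (Q L).
- have [F hF] := Q_open QL; have [m hm] := bound F.
  by exists m => A B _ hB _; apply: hF => a /hm hma; apply: iff_sym (hB a hma).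
- have [F hF] := Q_coopen QL; have [m hm] := bound F.
  by exists m => A B hA _ QA; case: (hF A _ QA) => a /hm hma; apply: iff_sym (hA a hma).
Qed.

(* König's lemma on the tree of finite prefixes: if no prefix length
   determined Q, one could choose bits forever keeping Q undetermined, and
   the resulting limit set would contradict [locally_constant]. *)
Lemma clopen_determined_by_prefix :
  exists n, forall A B, agree n A B -> Q A -> Q B.
Proof.
suff [n hn] : determined 0 (fun _ => False) by exists n => A B; apply: hn.
apply: NNPP => nd0.
pose next m X := set_at m (epsilon (inhabits True)
                             (fun b => ~ determined m.+1 (set_at m b X))) X.
pose Xs m := iteri m next (fun _ => False).
have nd m : ~ determined m (Xs m).
  by elim: m => // m IH; apply: epsilon_spec (undetermined_set_at IH).
have chain i j : i <= j -> agree i (Xs j) (Xs i).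
  elim: j => [|j IH]; first by rewrite leqn0 => /eqP ->.
  rewrite leq_eqVlt ltnS => /orP [/eqP -> // | hij].
  by apply: agree_trans (IH hij); apply: agree_le hij _; apply: agree_set_at.
pose L p := Xs (pickle p).+1 p.
have hL m : agree m (Xs m) L by move=> p hp; apply: chain hp p (ltnSn _).
have [m hm] := locally_constant L.
apply: (nd m); exists m => A B hA hAB; apply: hm.
  exact: agree_trans hA (hL m).
exact: agree_trans (agree_sym hAB) (agree_trans hA (hL m)).
Qed.

End ClopenDeterminedByPrefix.

Lemma clopen_finite_support k (Q : quantifier k) :
  qclopen Q -> exists L : seq (point k), supports Q (fun a => a \in L).
Proof.
move=> [Qo Qc]; have [n hn] := clopen_determined_by_prefix Qo Qc.
pose L : seq (point k) := pmap unpickle (iota 0 n).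
have agree_L A B : (forall a, a \in L -> (A a <-> B a)) -> agree n A B.
  move=> h p hp; apply: h; rewrite mem_pmap; apply/mapP.
  by exists (pickle p); rewrite ?mem_iota ?pickleK.
exists L => A B hL; have hAB := agree_L A B hL.
by split; apply: hn => //; apply: agree_sym.
Qed.

Definition insert_pt k (b : point k) (A : point k -> Prop) := fun c => A c \/ c = b.
Definition remove_pt k (b : point k) (A : point k -> Prop) := fun c => A c /\ c <> b.

Definition fin_range k (N : nat) (T : nat -> point k) :=
  fun c => exists2 j, j < N & c = T j.

Section PivotalPoints.
Variables (k : nat) (Q : quantifier k).

Definition pivotal (b : point k) :=
  exists A, ~ (Q (insert_pt b A) <-> Q (remove_pt b A)).

Lemma Q_ext A B : (forall a, A a <-> B a) -> (Q A <-> Q B).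
Proof.
move=> h; have -> // : A = B.
by apply: functional_extensionality => a; apply: propositional_extensionality.
Qed.

Lemma nonpivotal_invariant b : ~ pivotal b ->
  forall A B, (forall a, a <> b -> (A a <-> B a)) -> (Q A <-> Q B).
Proof.
move=> np.
have hb A : Q (insert_pt b A) <-> Q (remove_pt b A).
  by apply: NNPP => h; apply: np; exists A.
suff near_A A C : (forall a, a <> b -> (A a <-> C a)) -> (Q C <-> Q (remove_pt b A)).
  by move=> A B h; apply: iff_trans (near_A A A _) (iff_sym (near_A A B h)).
move=> h; have [Cb | nCb] := classic (C b).
- apply: iff_trans (hb A); apply: Q_ext => a; rewrite /insert_pt.
  have [-> | ne] := classic (a = b); first by split=> // _; right.
  by have := h a ne; tauto.
- apply: Q_ext => a; rewrite /remove_pt.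
  have [-> | ne] := classic (a = b); first by split=> // -[].
  by have := h a ne; tauto.
Qed.

Lemma pivotal_sub_support S : supports Q S -> forall b, pivotal b -> S b.
Proof.
move=> hS b [A hA]; apply: NNPP => nSb; apply: hA; apply: hS => a Sa.
have ne : a <> b by move=> e; apply: nSb; rewrite -e.
by rewrite /insert_pt /remove_pt; tauto.
Qed.

Lemma pivotal_agree_invariant (l : seq (point k)) A B :
  (forall a, pivotal a -> (A a <-> B a)) -> (forall a, a \notin l -> (A a <-> B a)) ->
  (Q A <-> Q B).
Proof.
elim: l A => [|x l IH] A hpiv hl; first by apply: Q_ext => a; apply: hl.
pose C a := if a == x then B a else A a.
apply: (@iff_trans _ (Q C)).
  have [px | npx] := classic (pivotal x).
    by apply: Q_ext => a; rewrite /C; case: eqP => [-> | //]; apply: hpiv.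
  by apply: nonpivotal_invariant npx _ _ _ => a /eqP ne; rewrite /C (negbTE ne).
apply: IH => a; rewrite /C; case: eqP => // /eqP ne.
  exact: hpiv.
by move=> al; apply: hl; rewrite in_cons negb_or ne.
Qed.

Lemma supports_pivotal (L : seq (point k)) :
  supports Q (fun a => a \in L) -> supports Q pivotal.
Proof.
move=> hL A B h; pose B' a := if a \in L then B a else A a.
apply: (@iff_trans _ (Q B')).
  apply: (pivotal_agree_invariant (l := L)) => a; rewrite /B'.
    by case: (a \in L) => //; apply: h.
  by move/negbTE ->.
by apply: hL => a aL; rewrite /B' aL.
Qed.

Lemma is_support_pivotal (L : seq (point k)) :
  supports Q (fun a => a \in L) -> is_support Q pivotal.
Proof. by move=> hL; split; [apply: supports_pivotal hL | apply: pivotal_sub_support]. Qed.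

Lemma pivotal_fin_range (L : seq (point k)) : supports Q (fun a => a \in L) ->
  forall b, pivotal b <->
    exists T, ~ (Q (insert_pt b (fin_range (size L) T)) <-> Q (remove_pt b (fin_range (size L) T))).
Proof.
move=> hL b; split=> [[A hA] | [T hT]]; last by exists (fin_range (size L) T).
pose T j := let a := nth b L j in if excluded_middle_informative (A a) then a else b.
have hT c : c \in L -> c <> b -> (fin_range (size L) T c <-> A c).
  move=> cL ne; split=> [[j _ ej] | Ac].
    by move: ne; rewrite ej /T; case: excluded_middle_informative.
  exists (index c L); first by rewrite index_mem.
  by rewrite /T nth_index //; case: excluded_middle_informative.
exists T => h; apply: hA.
have e_ins : Q (insert_pt b (fin_range (size L) T)) <-> Q (insert_pt b A).
  apply: hL => c cL; rewrite /insert_pt.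
  have [-> | ne] := classic (c = b); first by split=> _; right.
  by have := hT c cL ne; tauto.
have e_rem : Q (remove_pt b (fin_range (size L) T)) <-> Q (remove_pt b A).
  apply: hL => c cL; rewrite /remove_pt.
  have [-> | ne] := classic (c = b); first by split=> -[].
  by have := hT c cL ne; tauto.
by move: h e_ins e_rem; tauto.
Qed.

End PivotalPoints.

Definition FTrue {k} : form k := FEq k 0 0.
Definition FOr {k} (p q : form k) : form k := FNeg (FAnd (FNeg p) (FNeg q)).
Definition FXor {k} (p q : form k) : form k := FOr (FAnd p (FNeg q)) (FAnd (FNeg p) q).

Fixpoint FEqs {k} (n : nat) (f g : nat -> nat) : form k :=
  if n is n'.+1 then FAnd (FEq k (f n') (g n')) (FEqs n' f g) else FTrue.

Fixpoint FOrs {k} (n : nat) (F : nat -> form k) : form k :=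
  if n is n'.+1 then FOr (F n') (FOrs n' F) else FNeg FTrue.

Fixpoint FExs {k} (lo len : nat) (p : form k) : form k :=
  if len is len'.+1 then FEx lo (FExs lo.+1 len' p) else p.

Definition override (lo len : nat) (h rho : nat -> nat) : nat -> nat :=
  fun y => if (lo <= y) && (y < lo + len) then h y else rho y.

Lemma override0 lo h rho : override lo 0 h rho = rho.
Proof. by apply: functional_extensionality => y; rewrite /override addn0 ltnNge andbN. Qed.

Lemma override_upd lo len h rho v :
  override lo.+1 len h (upd rho lo v) = override lo len.+1 (upd h lo v) rho.
Proof.
apply: functional_extensionality => y; rewrite /override /upd.
have [-> | ne] := eqVneq y lo; first by rewrite ltnn leqnn addnS ltnS leq_addr.
by rewrite [lo < y]ltn_neqAle eq_sym ne addSn addnS.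
Qed.

Section Semantics.
Variables (k : nat) (Q : quantifier k).

Lemma sat_FOr rho p q : sat Q rho (FOr p q) <-> sat Q rho p \/ sat Q rho q.
Proof. by move=> /=; tauto. Qed.

Lemma sat_FXor rho p q : sat Q rho (FXor p q) <-> ~ (sat Q rho p <-> sat Q rho q).
Proof. by rewrite sat_FOr /=; have := classic (sat Q rho p); tauto. Qed.

Lemma sat_FEqs rho n f g :
  sat Q rho (FEqs n f g) <-> forall i, i < n -> rho (f i) = rho (g i).
Proof.
elim: n => [|n IH] /=; first by split=> // _ i.
rewrite IH; split=> [[h1 h2] i | h].
  by rewrite ltnS leq_eqVlt => /orP [/eqP -> | /h2].
by split=> [|i hi]; apply: h => //; apply: ltnW.
Qed.

Lemma sat_FOrs rho n F :
  sat Q rho (FOrs n F) <-> exists2 j, j < n & sat Q rho (F j).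
Proof.
elim: n => [|n IH]; first by split=> [/= h | []]; [exfalso; apply: h |].
rewrite sat_FOr IH; split=> [[h | [j hj h]] | [j]]; first by exists n.
  by exists j => //; apply: ltnW.
rewrite ltnS leq_eqVlt => /orP [/eqP -> | hj h]; first by left.
by right; exists j.
Qed.

Lemma sat_FExs lo len p rho :
  sat Q rho (FExs lo len p) <-> exists h, sat Q (override lo len h rho) p.
Proof.
elim: len lo rho => [|len IH] lo rho /=.
  by split=> [s | [h]]; [exists rho | ]; rewrite override0.
split=> [[v /IH [h]] | [h s]]; first by rewrite override_upd; exists (upd h lo v).
exists (h lo); apply/IH; exists h; rewrite override_upd.
suff -> : upd h lo (h lo) = h by [].
by apply: functional_extensionality => y; rewrite /upd; case: eqP => [-> |].
Qed.

End Semantics.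

Lemma tuple_nthP k (c d : point k) :
  (forall i, i < k -> nth 0 c i = nth 0 d i) <-> c = d.
Proof.
split=> [h | -> //]; apply: val_inj; apply: (eq_from_nth (x0 := 0)).
  by rewrite !size_tuple.
by move=> i; rewrite size_tuple; apply: h.
Qed.

Definition qvars k : point k := Tuple (introT eqP (size_iota k k)).

Lemma updt_qvars_in k rho (c : point k) i :
  i < k -> updt rho (qvars k) c (k + i) = nth 0 c i.
Proof.
move=> hi; rewrite /updt /= mem_iota leq_addr ltn_add2l hi.
by rewrite -{1}(nth_iota 0 k hi) index_uniq ?size_iota ?iota_uniq.
Qed.

Lemma updt_qvars_out k rho (c : point k) y :
  (y < k) || (k + k <= y) -> updt rho (qvars k) c y = rho y.
Proof.
move=> hy; rewrite /updt /= mem_iota.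
by case/orP: hy => hy; [rewrite leqNgt hy | rewrite ltnNge hy andbF].
Qed.

Definition block k (h : nat -> nat) (j : nat) : point k :=
  [tuple h (k + k + (j * k + i)) | i < k].

Lemma nth_block k h j i : i < k -> nth 0 (block k h j) i = h (k + k + (j * k + i)).
Proof. by move=> hi; rewrite -[i]/(nat_of_ord (Ordinal hi)) nth_mktuple. Qed.

Lemma block_surj k (T : nat -> point k) : exists h, forall j, block k h j = T j.
Proof.
exists (fun y => nth 0 (T ((y - (k + k)) %/ k)) ((y - (k + k)) %% k)) => j.
apply/tuple_nthP => i hi; rewrite nth_block // addKn divnMDl ?(leq_ltn_trans _ hi) //.
by rewrite divn_small // addn0 modnMDl modn_small.
Qed.

Lemma block_index_lt j i N k : j < N -> i < k -> j * k + i < N * k.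
Proof.
move=> hj hi; apply: (@leq_trans (j.+1 * k)); first by rewrite mulSn addnC ltn_add2r.
by rewrite leq_mul2r hj orbT.
Qed.

(* Variables [0..k-1] hold the point [b], [k..2k-1] are bound by [Q], and the
   block [2k + j k .. 2k + j k + k - 1] holds the [j]-th point of a finite set
   [M]; the formula says that [Q] separates [M] with and without [b]. *)
Definition param_eq k : form k := FEqs k (fun i => k + i) id.

Definition block_member k N : form k :=
  FOrs N (fun j => FEqs k (fun i => k + i) (fun i => k + k + (j * k + i))).

Definition pivot_body k N : form k :=
  FXor (FQ (qvars k) (FOr (block_member k N) (param_eq k)))
       (FQ (qvars k) (FAnd (block_member k N) (FNeg (param_eq k)))).

Definition pivot_formula k N : form k := FExs (k + k) (N * k) (pivot_body k N).

Section PivotFormula.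
Variables (k : nat) (Q : quantifier k) (N : nat) (b : point k) (rho : nat -> nat).
Hypothesis rho_b : forall i, i < k -> rho i = nth 0 b i.

Let env h c := updt (override (k + k) (N * k) h rho) (qvars k) c.

Lemma sat_param_eq h c : sat Q (env h c) (param_eq k) <-> c = b.
Proof.
have env_i i : i < k -> env h c (k + i) = nth 0 c i /\ env h c i = nth 0 b i.
  move=> hi; rewrite /env updt_qvars_in // updt_qvars_out ?hi // /override.
  have -> : (k + k <= i) = false by apply/negbTE; rewrite -ltnNge ltn_addr.
  by rewrite rho_b.
rewrite sat_FEqs -tuple_nthP; split=> e i hi; have [ei ei'] := env_i i hi.
  by rewrite -ei -ei'; apply: e.
by rewrite /= ei ei'; apply: e.
Qed.

Lemma sat_block_member h c :
  sat Q (env h c) (block_member k N) <-> fin_range N (block k h) c.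
Proof.
have env_block c' j i : j < N -> i < k ->
    env h c' (k + i) = nth 0 c' i /\ env h c' (k + k + (j * k + i)) = nth 0 (block k h j) i.
  move=> hj hi; rewrite /env updt_qvars_in // updt_qvars_out ?leq_addr ?orbT //.
  by rewrite nth_block // /override leq_addr ltn_add2l block_index_lt.
rewrite sat_FOrs; split=> [[j hj /sat_FEqs e] | [j hj ->]]; exists j => //.
  by apply/tuple_nthP => i hi; have [<- <-] := env_block c j i hj hi; apply: e.
by apply/sat_FEqs => i hi; have [-> ->] := env_block (block k h j) j i hj hi.
Qed.

Lemma sat_pivot_body h :
  sat Q (override (k + k) (N * k) h rho) (pivot_body k N) <->
  ~ (Q (insert_pt b (fin_range N (block k h))) <-> Q (remove_pt b (fin_range N (block k h)))).
Proof.
rewrite sat_FXor /=.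
have e_ins : Q (fun c => sat Q (env h c) (FOr (block_member k N) (param_eq k))) <->
             Q (insert_pt b (fin_range N (block k h))).
  by apply: Q_ext => c; rewrite sat_FOr sat_block_member sat_param_eq.
have e_rem : Q (fun c => sat Q (env h c) (FAnd (block_member k N) (FNeg (param_eq k)))) <->
             Q (remove_pt b (fin_range N (block k h))).
  by apply: Q_ext => c; rewrite /= sat_block_member sat_param_eq.
by move: e_ins e_rem; rewrite /env; tauto.
Qed.

Lemma sat_pivot_formula :
  sat Q rho (pivot_formula k N) <->
  exists T, ~ (Q (insert_pt b (fin_range N T)) <-> Q (remove_pt b (fin_range N T))).
Proof.
rewrite sat_FExs; split=> [[h /sat_pivot_body] | [T hT]]; first by exists (block k h).
have [h /functional_extensionality eh] := block_surj T.
by exists h; apply/sat_pivot_body; rewrite eh.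
Qed.

End PivotFormula.

Theorem lemma17 (k : nat) (Q : quantifier k) (HQ : qclopen Q) :
  exists S : point k -> Prop, is_support Q S /\ definable Q S.
Proof.
have [L hL] := clopen_finite_support HQ.
exists (pivotal Q); split; first exact: is_support_pivotal hL.
exists (pivot_formula k (size L)) => b rho rho_b.
by rewrite (sat_pivot_formula _ _ rho_b); exact: (pivotal_fin_range hL b).
Qed.
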